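(* Let $G$ be a finitely generated group whose growth function satisfies $\gamma_G(n)\succcurlyeq 2^{n^{\alpha}}$ for some $\alpha\in(0,1]$. Then $\mathrm{WP}_G\notin\mathrm{DTIME}_1(o(n^{1+\alpha}))$.
   Context: The growth function $\gamma_G(n)$ is the number of elements of word length at most $n$ with respect to a finite symmetric generating set. For nondecreasing functions, $f\succcurlyeq g$ means there is $C>0$ with $g(n)\le f(Cn)$ for all $n$. $\mathrm{WP}_G$ is the word problem $\{w\in S^{*}: w=_G e\}$; $\mathrm{DTIME}_1(o(t(n)))$ is the class of languages decided in time $o(t(n))$ by a deterministic single-tape Turing machine. *)

From HB Require Import structures.
From mathcomp Require Import all_boot.
From Stdlib Require Import Reals ZArith ClassicalEpsilon.

Set Implicit Arguments.
Unset Strict Implicit.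
Unset Printing Implicit Defensive.

Definition ceq (T : Type) (x y : T) : bool :=
  if excluded_middle_informative (x = y) then true else false.

Lemma ceqP (T : Type) : Equality.axiom (@ceq T).
Proof.
move=> x y; rewrite /ceq; case: excluded_middle_informative => h.
  by constructor.
by constructor.
Qed.

Definition classicT (T : Type) : Type := T.
HB.instance Definition _ (T : Type) := hasDecEq.Build (classicT T) (@ceqP T).

Record group_on (G : Type) := GroupOn {
  gmul : G -> G -> G;
  ginv : G -> G;
  gone : G;
  gmulA : forall x y z, gmul x (gmul y z) = gmul (gmul x y) z;
  gmul1 : forall x, gmul gone x = x;
  gmulV : forall x, gmul (ginv x) x = gone
}.

Definition geval (G : Type) (grp : group_on G) (k : nat) (s : 'I_k -> G)
  (w : seq 'I_k) : G :=
  foldr (fun i acc => gmul grp (s i) acc) (gone grp) w.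

Definition words_upto (k n : nat) : seq (seq 'I_k) :=
  flatten [seq [seq tval t | t : m.-tuple 'I_k] | m <- iota 0 n.+1].

Definition growth (G : Type) (grp : group_on G) (k : nat) (s : 'I_k -> G)
  (n : nat) : nat :=
  size (undup [seq (geval grp s w : classicT G) | w <- words_upto k n]).

Definition WP (G : Type) (grp : group_on G) (k : nat) (s : 'I_k -> G) :
  seq 'I_k -> Prop := fun w => geval grp s w = gone grp.

(* n^a for a natural n and a real exponent a > 0 (with 0^a = 0) *)
Definition npow (n : nat) (a : R) : R :=
  match n with 0 => 0%R | _ => Rpower (INR n) a end.

(* f(x) for real x >= 0, where f counts elements of length <= x *)
Definition at_real (f : nat -> nat) (x : R) : nat := f (Z.to_nat (Int_part x)).

Definition dominates (f : nat -> nat) (g : nat -> R) : Prop :=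
  exists C : R, (0 < C)%R /\ forall n : nat, (g n <= INR (at_real f (C * INR n)))%R.

Inductive move := MoveL | MoveR | MoveS.
Definition shift (m : move) : Z :=
  match m with MoveL => (-1)%Z | MoveR => 1%Z | MoveS => 0%Z end.

Record TM (Sigma : finType) := MkTM {
  state : finType;
  sym : finType;
  inp : Sigma -> sym;
  blank : sym;
  q0 : state;
  qacc : state;
  qrej : state;
  delta : state -> sym -> state * sym * move;
  inp_inj : injective inp;
  blank_notin : forall a, inp a <> blank;
  acc_rej : qacc <> qrej
}.

Record config (Sigma : finType) (M : TM Sigma) := Config {
  cstate : state M;
  ctape : Z -> sym M;
  chead : Z
}.

Definition halting (Sigma : finType) (M : TM Sigma) (q : state M) : bool :=
  (q == @qacc _ M) || (q == @qrej _ M).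

Definition step (Sigma : finType) (M : TM Sigma) (c : config M) : config M :=
  if halting (cstate c) then c else
  let: (q', a, m) := @delta _ M (cstate c) (ctape c (chead c)) in
  Config q' (fun i => if Z.eqb i (chead c) then a else ctape c i)
         (chead c + shift m)%Z.

Definition init (Sigma : finType) (M : TM Sigma) (w : seq Sigma) : config M :=
  @Config _ M (@q0 _ M)
    (fun i => if (Z.leb 0 i && Z.ltb i (Z.of_nat (size w)))%bool
              then nth (@blank _ M) (map (@inp _ M) w) (Z.to_nat i) else @blank _ M)
    0%Z.

Definition run (Sigma : finType) (M : TM Sigma) (w : seq Sigma) (t : nat) :
  config M := ssrnat.iter t (@step Sigma M) (init M w).

Definition halted_by (Sigma : finType) (M : TM Sigma) (w : seq Sigma) (t : nat) :
  Prop := halting (cstate (run M w t)).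

Definition decides (Sigma : finType) (M : TM Sigma) (L : seq Sigma -> Prop) :
  Prop :=
  forall w, (exists t, halted_by M w t) /\
    (forall t, halted_by M w t -> (cstate (run M w t) = @qacc _ M <-> L w)).

Definition time_little_o (Sigma : finType) (M : TM Sigma) (t : nat -> R) : Prop :=
  forall eps : R, (0 < eps)%R -> exists N0 : nat, forall w : seq Sigma,
    (N0 <= size w)%nat -> exists T : nat, (INR T <= eps * t (size w))%R /\ halted_by M w T.

Definition DTIME1_o (Sigma : finType) (L : seq Sigma -> Prop) (t : nat -> R) : Prop :=
  exists M : TM Sigma, decides M L /\ time_little_o M t.

From mathcomp Require Import all_boot.
From Stdlib Require Import Reals ZArith Lia Lra.
From mathcomp Require Import zify ssrnat.

(* Hennie's crossing-sequence argument.  Let a one-tape machine [M] decide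
   the word problem in time o(n^(1+a)).  For a word [x] of length [j <= m]
   the word [x c^m (x c^m)^-1] represents the identity, has length at most
   [4m], and is accepted within [m L] steps, [L ~ delta m^a]; hence some
   boundary inside the block [c^m] is crossed at most [L] times.  If two
   words [x], [x'] of length [j] have the same crossing sequence at the same
   boundary, cutting and pasting the two computations shows that [M] also
   accepts [x c^m (x' c^m)^-1], so [x = x'] in [G].  The ball of radius [m]
   thus has at most [(m + 1) m Q^L = 2^(o(m^a))] elements, [Q] depending
   only on [M], which contradicts growth [2^(m^a / D)] along infinitely many
   radii [m]. *)

Set Implicit Arguments.
Unset Strict Implicit.
Unset Printing Implicit Defensive.

(** * Crossing sequences of one-tape machines *)

Section CrossingSequences.

Variables (Sigma : finType) (M : TM Sigma).
Implicit Types (c d e : config M) (f : nat -> config M).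

Definition agree (P : Z -> bool) c d := forall i, P i -> ctape c i = ctape d i.

Lemma step_agree (P : Z -> bool) c d :
  cstate c = cstate d -> chead c = chead d -> P (chead c) -> agree P c d ->
  [/\ cstate (step c) = cstate (step d), chead (step c) = chead (step d)
    & agree P (step c) (step d)].
Proof.
move=> Hs Hh HP Ha; rewrite /step -Hs.
case: (halting (cstate c)) => //.
have -> : ctape d (chead d) = ctape c (chead c) by rewrite -Hh Ha.
case: (delta (cstate c) (ctape c (chead c))) => [[q a] mv] /=.
split=> //; first by rewrite Hh.
move=> i Hi /=; rewrite Hh; case: (Z.eqb i (chead d)) => //; exact: Ha.
Qed.

Lemma step_tape_off c i : i <> chead c -> ctape (step c) i = ctape c i.
Proof.
move=> H; rewrite /step; case: (halting (cstate c)) => //.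
case: (delta _ _) => [[q a] mv] /=.
by case: (Z.eqb_spec i (chead c)).
Qed.

Lemma step_head c : (chead c - 1 <= chead (step c) <= chead c + 1)%Z.
Proof.
rewrite /step; case: (halting (cstate c)); first lia.
case: (delta _ _) => [[q a] mv] /=; case: mv => /=; lia.
Qed.

Lemma step_halting c : halting (cstate c) -> step c = c.
Proof. by rewrite /step => ->. Qed.

Definition trajectory f := forall t, f t.+1 = step (f t).

Lemma run_trajectory w : trajectory (run M w).
Proof. by []. Qed.

Lemma trajectory_halted f t t' :
  trajectory f -> halting (cstate (f t)) -> t <= t' -> f t' = f t.
Proof.
move=> Hf Hh; elim: t' => [|t' IH]; first by rewrite leqn0 => /eqP ->.
rewrite leq_eqVlt => /orP [/eqP <- //|Hlt].
by rewrite Hf IH // step_halting // -(IH Hlt).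
Qed.

(* The boundary [B] lies between cells [B - 1] and [B]. *)
Definition left_of (B : Z) c : bool := (chead c <? B)%Z.

Definition on_side (B : Z) (sg : bool) (i : Z) : bool := (i <? B)%Z == sg.

Lemma on_sideN B sg i : on_side B (~~ sg) i = ~~ on_side B sg i.
Proof. by rewrite /on_side; case: sg; case: (i <? B)%Z. Qed.

Definition crossing_label (B : Z) c : state M * bool := (cstate c, left_of B c).

Definition crossing_step (B : Z) c d : seq (state M * bool) :=
  if left_of B c != left_of B d then [:: crossing_label B d] else [::].

Lemma size_crossing_step B c d : size (crossing_step B c d) = (left_of B c != left_of B d).
Proof. by rewrite /crossing_step; case: ifP. Qed.

Fixpoint crossings f (B : Z) (t : nat) : seq (state M * bool) :=
  if t is t'.+1 then crossings f B t' ++ crossing_step B (f t') (f t'.+1) else [::].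

Lemma crossings_prefix f B t t' :
  t <= t' -> crossings f B t = take (size (crossings f B t)) (crossings f B t').
Proof.
elim: t' => [|t' IH]; first by rewrite leqn0 => /eqP ->.
rewrite leq_eqVlt => /orP [/eqP -> | Hlt]; first by rewrite take_size.
rewrite /= takel_cat; first exact: IH.
by rewrite (IH Hlt) size_take geq_minr.
Qed.

Lemma size_crossings_mono f B t t' :
  t <= t' -> size (crossings f B t) <= size (crossings f B t').
Proof. by move=> H; rewrite (crossings_prefix f B H) size_take geq_minr. Qed.

Lemma crossings_eq_of_size f B t t' : t <= t' ->
  size (crossings f B t') <= size (crossings f B t) -> crossings f B t' = crossings f B t.
Proof. by move=> H Hs; rewrite (crossings_prefix f B H) take_oversize. Qed.

Lemma left_of_const f B t r :
  (forall r', t <= r' <= r -> crossings f B r' = crossings f B t) ->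
  forall r', t <= r' <= r -> left_of B (f r') = left_of B (f t).
Proof.
move=> H r'; elim: r' => [|r' IH]; first by rewrite leqn0 => /andP [/eqP ->].
rewrite leq_eqVlt ltnS => /andP [/orP [/eqP -> //| Htr] Hr].
have Hstep : crossings f B r'.+1 = crossings f B r'.
  rewrite (H r'.+1); last by rewrite Hr andbT ltnW.
  by rewrite (H r') // Htr ltnW.
move: Hstep => /= /(congr1 size); rewrite size_cat size_crossing_step.
case: eqP => [<- _|]; last lia.
by apply: IH; rewrite Htr ltnW.
Qed.

Lemma next_crossing f B t T :
  t <= T -> size (crossings f B t) < size (crossings f B T) ->
  exists r, [/\ t <= r < T, (forall r', t <= r' <= r -> crossings f B r' = crossings f B t),
     left_of B (f r) != left_of B (f r.+1)
     & crossings f B r.+1 = crossings f B t ++ [:: crossing_label B (f r.+1)]].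
Proof.
elim: T => [|T IH]; first by rewrite leqn0 => /eqP ->; rewrite ltnn.
rewrite leq_eqVlt ltnS => /orP [/eqP -> | Hlt]; first by rewrite ltnn.
move=> Hs.
case: (ltnP (size (crossings f B t)) (size (crossings f B T))) => H2.
  have [r [/andP [H1 H3] H4 H5 H6]] := IH Hlt H2.
  by exists r; split => //; rewrite H1 ltnW.
have HT : crossings f B T = crossings f B t by apply: crossings_eq_of_size.
exists T; rewrite Hlt ltnSn; split => //.
- move=> r' /andP [H1 H3]; apply: crossings_eq_of_size => //.
  by rewrite -HT; apply: size_crossings_mono.
- by move: Hs; rewrite /= HT size_cat size_crossing_step; case: (_ != _) => //; rewrite addn0 ltnn.
- by move: Hs; rewrite /= HT /crossing_step; case: ifP => // _; rewrite cats0 ltnn.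
Qed.

Lemma agree_off_side f B sg t r : trajectory f -> t <= r ->
  (forall r', t <= r' < r -> left_of B (f r') = sg) ->
  agree (fun i => ~~ on_side B sg i) (f r) (f t).
Proof.
move=> Hf; elim: r => [|r IH]; first by rewrite leqn0 => /eqP -> _ i.
rewrite leq_eqVlt ltnS => /orP [/eqP -> //| Htr] Hside i Hi.
rewrite Hf step_tape_off; first by apply: IH => // r' /andP [H1 H2]; rewrite Hside // H1 ltnW.
move=> E; move: Hi; rewrite E /on_side; have := Hside r; rewrite Htr ltnSn /left_of => -> //.
by rewrite eqxx.
Qed.

Lemma head_after_crossing B c : left_of B c != left_of B (step c) ->
  chead (step c) = (if left_of B (step c) then (B - 1)%Z else B).
Proof.
rewrite /left_of; have := step_head c.
case: (Z.ltb_spec (chead c) B); case: (Z.ltb_spec (chead (step c)) B) => //= *; lia.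
Qed.

(* Invariant of the pasted run [e] while its head is on side [sg] of [B]:
   [e] is the active run [a] at time [ta] on side [sg], and the other side
   is frozen as in the passive run [p] at time [tp], which has just entered
   side [sg].  Both have produced the crossing sequence [ce] so far. *)
Definition simulates (B : Z) (sg : bool) (ce : seq (state M * bool)) e
  (a p : nat -> config M) (ta tp Ta Tp : nat) :=
  [/\ ce = crossings a B ta /\ ce = crossings p B tp, ta <= Ta /\ tp <= Tp,
      left_of B e = sg /\ left_of B (p tp) = sg,
      cstate e = cstate (a ta) /\ chead e = chead (a ta)
    & agree (on_side B sg) e (a ta) /\ agree (fun i => ~~ on_side B sg i) e (p tp)].

Section Simulation.

Variables (B : Z) (a p : nat -> config M) (Ta Tp : nat).
Hypotheses (a_traj : trajectory a) (p_traj : trajectory p)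
  (a_halt : halting (cstate (a Ta)))
  (same_crossings : crossings a B Ta = crossings p B Tp).

Lemma simulates_active_step sg ce e ta tp :
  simulates B sg ce e a p ta tp Ta Tp -> ~~ halting (cstate e) ->
  [/\ ta < Ta, cstate (step e) = cstate (a ta.+1), chead (step e) = chead (a ta.+1),
      agree (on_side B sg) (step e) (a ta.+1)
    & agree (fun i => ~~ on_side B sg i) (step e) (p tp)].
Proof.
move=> [_ [Hta _] [Hse _] [Hst Hhd] [Hag Hpg]] Hnh.
have HPe : on_side B sg (chead e) by rewrite /on_side -Hse.
have [Hst1 Hhd1 Hag1] := step_agree Hst Hhd HPe Hag.
rewrite -a_traj in Hst1 Hhd1 Hag1; split => //.
- rewrite ltn_neqAle Hta andbT; apply/eqP => E; move: Hnh.
  by rewrite Hst E a_halt.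
- move=> i Hi; rewrite step_tape_off; first exact: Hpg.
  by move=> E; move: Hi; rewrite E HPe.
Qed.

Lemma simulates_active_crossings sg ce e ta tp :
  simulates B sg ce e a p ta tp Ta Tp -> ~~ halting (cstate e) ->
  crossings a B ta.+1 = ce ++ crossing_step B e (step e).
Proof.
move=> HI Hnh; have [_ Hst1 Hhd1 _ _] := simulates_active_step HI Hnh.
case: HI => [[Hca _] _ _ [_ Hhd] _].
by rewrite /= /crossing_step /crossing_label /left_of -Hhd -Hhd1 Hst1 Hca.
Qed.

Lemma simulates_step_stay sg ce e ta tp :
  simulates B sg ce e a p ta tp Ta Tp -> ~~ halting (cstate e) ->
  left_of B (step e) = sg ->
  simulates B sg (ce ++ crossing_step B e (step e)) (step e) a p ta.+1 tp Ta Tp.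
Proof.
move=> HI Hnh Hs1; have [Hlt Hst1 Hhd1 Hag1 Hpg1] := simulates_active_step HI Hnh.
have Hca1 := simulates_active_crossings HI Hnh.
case: HI => [[_ Hcp] [_ Htp] [Hse Hsp] _ _].
have Hcs : crossing_step B e (step e) = [::] by rewrite /crossing_step Hse Hs1 eqxx.
by move: Hca1; rewrite Hcs cats0 => Hca1; split.
Qed.

(* When [e] crosses [B], the passive run [p] also crosses [B] next, and it
   does so with the same label, since both continue the crossing sequence
   [ce] inside the common crossing sequence of the complete runs. *)
Lemma simulates_passive_crossing sg ce e ta tp :
  simulates B sg ce e a p ta tp Ta Tp -> ~~ halting (cstate e) ->
  left_of B e != left_of B (step e) ->
  exists r, [/\ tp <= r < Tp, (forall r', tp <= r' <= r -> left_of B (p r') = sg),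
    crossings p B r.+1 = ce ++ crossing_step B e (step e),
    left_of B (p r) != left_of B (p r.+1)
    & crossing_label B (p r.+1) = crossing_label B (step e)].
Proof.
move=> HI Hnh Hcr; have [Hlt _ _ _ _] := simulates_active_step HI Hnh.
have Hca1 := simulates_active_crossings HI Hnh.
case: HI => [[_ Hcp] [_ Htp] [_ Hsp] _ _].
have Hcse : crossing_step B e (step e) = [:: crossing_label B (step e)].
  by rewrite /crossing_step Hcr.
have Hsz : size (crossings p B tp) < size (crossings p B Tp).
  rewrite -same_crossings -Hcp; apply: leq_trans (size_crossings_mono a B Hlt).
  by rewrite Hca1 size_cat Hcse addn1.
have [r [/andP [H1 H2] H3 H4 H5]] := next_crossing Htp Hsz.
have Hcp1 : crossings p B r.+1 = crossings a B ta.+1.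
  rewrite (crossings_prefix p B (H2 : r.+1 <= Tp)) (crossings_prefix a B (Hlt : ta.+1 <= Ta)).
  by rewrite same_crossings H5 Hca1 -Hcp !size_cat Hcse.
exists r; split => //; first by rewrite H1.
- by move=> r' Hr'; rewrite (left_of_const H3) // Hsp.
-
by rewrite Hcp1 Hca1.
- move: Hcp1; rewrite H5 Hca1 -Hcp Hcse => /eqP; rewrite eqseq_cat //.
  by case/andP => _ /eqP [Hs Hl]; rewrite /crossing_label Hs Hl.
Qed.

Lemma simulates_step_cross sg ce e ta tp :
  simulates B sg ce e a p ta tp Ta Tp -> ~~ halting (cstate e) ->
  left_of B (step e) = ~~ sg ->
  exists2 tp', tp < tp' &
    simulates B (~~ sg) (ce ++ crossing_step B e (step e)) (step e) p a tp' ta.+1 Tp Ta.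
Proof.
move=> HI Hnh Hs1; have [Hlt Hst1 Hhd1 Hag1 Hpg1] := simulates_active_step HI Hnh.
have Hca1 := simulates_active_crossings HI Hnh.
have Hcr : left_of B e != left_of B (step e) by case: HI => _ _ [-> _] _ _; rewrite Hs1; case: (sg).
have [r [/andP [Htr HrT] Hside Hcp1 Hcrp Hlab]] := simulates_passive_crossing HI Hnh Hcr.
case: Hlab => Hst2 Hside2.
have Hhp : chead (p r.+1) = chead (step e).
  rewrite p_traj in Hcrp Hside2 *.
  by rewrite (head_after_crossing Hcr) -Hside2 (head_after_crossing Hcrp).
exists r.+1 => //; split.
- by rewrite Hcp1 Hca1.
- by [].
- by rewrite /left_of -Hhd1 -/(left_of B (step e)) Hs1.
- by rewrite Hst2 Hhp.
split=> i Hi; last by apply: Hag1; move: Hi; rewrite on_sideN negbK.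
rewrite Hpg1 -?on_sideN //; symmetry.
apply: (agree_off_side (B := B) (sg := sg) p_traj (leqW Htr)); last by rewrite -on_sideN.
by move=> r' /andP [Hr1 /ltnSE Hr2]; rewrite Hside ?Hr1.
Qed.

End Simulation.

Lemma init_tape_left (lu ru rv : seq Sigma) i : (i <? Z.of_nat (size lu))%Z ->
  ctape (init M (lu ++ rv)) i = ctape (init M (lu ++ ru)) i.
Proof.
move=> /Z.ltb_lt Hi /=.
case: (Z.leb_spec 0 i) => Hi0 //=.
have Hlt : (Z.to_nat i < size lu)%nat by apply/ltP; lia.
have -> : (i <? Z.of_nat (size (lu ++ rv)))%Z by apply/Z.ltb_lt; rewrite size_cat; lia.
have -> : (i <? Z.of_nat (size (lu ++ ru)))%Z by apply/Z.ltb_lt; rewrite size_cat; lia.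
by rewrite !map_cat !nth_cat size_map Hlt.
Qed.

Lemma init_tape_right (lu lv rv : seq Sigma) i :
  size lu = size lv -> ~~ (i <? Z.of_nat (size lu))%Z ->
  ctape (init M (lu ++ rv)) i = ctape (init M (lv ++ rv)) i.
Proof.
move=> Hs /negP Hi /=.
have Hi' : (Z.of_nat (size lu) <= i)%Z by case: (Z.ltb_spec i (Z.of_nat (size lu))) Hi.
have -> : (0 <=? i)%Z by apply/Z.leb_le; lia.
rewrite /= !size_cat Hs; case: (i <? _)%Z => //.
have Hge : (size lu <= Z.to_nat i)%nat by apply/leP; lia.
by rewrite !map_cat !nth_cat !size_map -Hs ltnNge Hge.
Qed.

Section CutAndPaste.

Variables (lu ru lv rv : seq Sigma) (T1 T2 : nat).
Let B := Z.of_nat (size lu).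
Let c := run M (lu ++ ru).
Let d := run M (lv ++ rv).
Let e := run M (lu ++ rv).
Hypotheses (same_size : size lu = size lv)
  (c_halt : halting (cstate (c T1))) (d_halt : halting (cstate (d T2)))
  (same_crossings : crossings c B T1 = crossings d B T2).

Lemma simulates_init sg : left_of B (e 0) = sg ->
  if sg then simulates B true [::] (e 0) c d 0 0 T1 T2
  else simulates B false [::] (e 0) d c 0 0 T2 T1.
Proof.
have Hc : left_of B (e 0) = left_of B (c 0) by [].
have Hd : left_of B (e 0) = left_of B (d 0) by [].
have Hl i : (i <? B)%Z -> ctape (e 0) i = ctape (c 0) i by apply: init_tape_left.
have Hr i : ~~ (i <? B)%Z -> ctape (e 0) i = ctape (d 0) i by apply: init_tape_right.
case: sg => Hs; do 2!split=> //; move=> i; rewrite /on_side;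
  case: (i <? B)%Z (Hl i) (Hr i) => // H _ _; exact: H.
Qed.

(* The pasted run [e] alternately replays [c] left of [B] and [d] right of
   [B]; each of its steps is a step of one of them, so it halts by time
   [T1 + T2 + 1]. *)
Lemma pasted_simulation t : exists t1 t2,
  (~~ halting (cstate (e t)) -> t <= t1 + t2) /\
  (if left_of B (e t) then simulates B true (crossings e B t) (e t) c d t1 t2 T1 T2
   else simulates B false (crossings e B t) (e t) d c t2 t1 T2 T1).
Proof.
elim: t => [|t [t1 [t2 [Hm HI]]]].
  by exists 0, 0; split=> //; apply: simulates_init.
have He : e t.+1 = step (e t) by [].
have Hcs : crossings e B t.+1 = crossings e B t ++ crossing_step B (e t) (step (e t)) by [].
rewrite He Hcs; case Hh: (halting (cstate (e t))).
  by exists t1, t2; rewrite step_halting ?Hh // /crossing_step eqxx cats0.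
move/negbT: Hh => Hh; have {}Hm := Hm Hh.
case Hs: (left_of B (e t)) HI => HI; case Hs1: (left_of B (step (e t))).
- by exists t1.+1, t2; split=> [_|]; [lia | apply: simulates_step_stay].
- have [tp' Hlt HI'] :=
    simulates_step_cross (run_trajectory _) (run_trajectory _) c_halt same_crossings HI Hh Hs1.
  by exists t1.+1, tp'; split=> [_|//]; lia.
- have [tp' Hlt HI'] :=
    simulates_step_cross (run_trajectory _) (run_trajectory _) d_halt (esym same_crossings)
      HI Hh Hs1.
  by exists tp', t2.+1; split=> [_|//]; lia.
- by exists t1, t2.+1; split=> [_|]; [lia | apply: simulates_step_stay].
Qed.

Lemma cut_and_paste : exists T, halting (cstate (e T)) /\
  (cstate (e T) = cstate (c T1) \/ cstate (e T) = cstate (d T2)).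
Proof.
have [t1 [t2 [Hm HI]]] := pasted_simulation (T1 + T2).+1.
have Hbound : t1 <= T1 /\ t2 <= T2 by move: HI; case: ifP => _ [_ [? ?] _ _ _].
have Hhalt : halting (cstate (e (T1 + T2).+1)) by apply/negPn/negP => /Hm; lia.
exists (T1 + T2).+1; split=> //.
move: HI; case: ifP => _ [_ [Ht _] _ [Hst _] _].
- left; have Hct : halting (cstate (c t1)) by rewrite -Hst.
  by rewrite Hst (trajectory_halted (f := c) (run_trajectory _) Hct Ht).
- right; have Hdt : halting (cstate (d t2)) by rewrite -Hst.
  by rewrite Hst (trajectory_halted (f := d) (run_trajectory _) Hdt Ht).
Qed.

End CutAndPaste.

(* A single step only crosses the boundary between the old and the new head cell. *)
Lemma count_crossing_step_le1 c (bs : seq nat) : uniq bs ->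
  count (fun b => left_of (Z.of_nat b) c != left_of (Z.of_nat b) (step c)) bs <= 1.
Proof.
move=> Hu; have Hh := step_head c.
pose v := Z.to_nat (Z.max (chead c) (chead (step c))).
apply: (@leq_trans (count (pred1 v) bs)); last by rewrite count_uniq_mem //; case: (_ \in _).
apply: sub_count => b /=; rewrite /left_of.
by case: (Z.ltb_spec (chead c) (Z.of_nat b)); case: (Z.ltb_spec (chead (step c)) (Z.of_nat b))
  => //= H1 H2 _; apply/eqP; rewrite /v; lia.
Qed.

Lemma sum_size_crossings f (bs : seq nat) T : trajectory f -> uniq bs ->
  \sum_(b <- bs) size (crossings f (Z.of_nat b) T) <= T.
Proof.
move=> Hf Hu; elim: T => [|T IH]; first by rewrite big1_seq.
under eq_bigr => b _ do rewrite /= size_cat size_crossing_step Hf.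
rewrite big_split /= -addn1; apply: leq_add => //.
have -> : \sum_(b <- bs) (left_of (Z.of_nat b) (f T) != left_of (Z.of_nat b) (step (f T))) =
  count (fun b => left_of (Z.of_nat b) (f T) != left_of (Z.of_nat b) (step (f T))) bs.
  by rewrite -sum1_count [RHS]big_mkcond; apply: eq_bigr => b _; case: (_ != _).
exact: count_crossing_step_le1.
Qed.

Lemma exists_small_summand (A : eqType) (g : A -> nat) (s : seq A) T :
  s != [::] -> \sum_(x <- s) g x <= T -> exists2 x, x \in s & size s * g x <= T.
Proof.
move=> Hne Hs; case: (boolP (has (fun x => size s * g x <= T) s)) => [/hasP [x] | /hasPn Hall].
  by exists x.
have : size s * T.+1 <= size s * T.
  apply: leq_trans (leq_mul (leqnn _) Hs).
  have -> : size s * T.+1 = \sum_(x <- s) T.+1.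
    by rewrite big_const_seq iter_addn_0 count_predT mulnC.
  by rewrite big_distrr !big_seq; apply: leq_sum => x Hx; rewrite ltnNge Hall.
by rewrite leq_pmul2l ?ltnn // lt0n size_eq0.
Qed.

Lemma short_crossing f j m L T : trajectory f -> 0 < m -> T <= m * L ->
  exists2 b, j < b <= j + m & size (crossings f (Z.of_nat b) T) <= L.
Proof.
move=> Hf Hm HT.
have Hne : iota j.+1 m != [::] by rewrite -size_eq0 size_iota -lt0n.
have [b Hb Hsz] :=
  exists_small_summand Hne (leq_trans (sum_size_crossings T Hf (iota_uniq j.+1 m)) HT).
exists b; first by move: Hb; rewrite mem_iota addSn ltnS.
by rewrite -(leq_pmul2l Hm) -{1}(size_iota j.+1 m).
Qed.

End CrossingSequences.

(** * Words representing the identity *)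

Section Words.

Variables (G : Type) (grp : group_on G).
Local Notation "x * y" := (gmul grp x y).
Local Notation "1" := (gone grp).
Local Notation "x ^-1" := (ginv grp x).

Lemma gmulVr x : x * x^-1 = 1.
Proof.
transitivity ((x^-1)^-1 * x^-1 * (x * x^-1)); first by rewrite gmulV gmul1.
by rewrite -gmulA (gmulA grp x^-1 x x^-1) gmulV gmul1 gmulV.
Qed.

Lemma gmul1r x : x * 1 = x.
Proof. by rewrite -(gmulV grp x) gmulA gmulVr gmul1. Qed.

Lemma gmulIr z : injective (fun x => x * z).
Proof.
move=> x y /= E.
by rewrite -(gmul1r x) -(gmul1r y) -(gmulVr z) !gmulA E.
Qed.

Variables (k : nat) (s : 'I_k -> G) (iv : 'I_k -> 'I_k).
Hypothesis s_iv : forall i, s (iv i) = (s i)^-1.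

Lemma geval_cat (w1 w2 : seq 'I_k) : geval grp s (w1 ++ w2) = geval grp s w1 * geval grp s w2.
Proof. by elim: w1 => [|i w1 IH] /=; rewrite ?gmul1 // IH gmulA. Qed.

Definition inv_word (w : seq 'I_k) : seq 'I_k := rev (map iv w).

Lemma geval_cat_inv_word w : geval grp s (w ++ inv_word w) = 1.
Proof.
elim: w => [|i w IH] //=.
rewrite /inv_word map_cons rev_cons -cats1 catA geval_cat -/(inv_word w) /=.
by rewrite IH gmul1 s_iv gmul1r gmulVr.
Qed.

Lemma geval_eq_of_cat_inv_word w1 w2 :
  geval grp s (w1 ++ inv_word w2) = 1 -> geval grp s w1 = geval grp s w2.
Proof.
rewrite geval_cat -(geval_cat_inv_word w2) geval_cat; exact: gmulIr.
Qed.

(* The padding [a^m] provides [m] boundaries at which runs on different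
   words [x] of the same length can be cut and pasted. *)
Definition pad_word (a : 'I_k) (m : nat) (x : seq 'I_k) : seq 'I_k :=
  (x ++ nseq m a) ++ inv_word (x ++ nseq m a).

Lemma pad_wordE a m x i : i <= m ->
  pad_word a m x = (x ++ nseq i a) ++ (nseq (m - i) a ++ inv_word (x ++ nseq m a)).
Proof. by move=> Hi; rewrite /pad_word -{1}(subnKC Hi) nseqD !catA. Qed.

Lemma size_pad_word a m x : size (pad_word a m x) = (size x + m).*2.
Proof. by rewrite /pad_word /inv_word size_cat size_rev size_map addnn size_cat size_nseq. Qed.

Lemma WP_pad_word a m x : WP grp s (pad_word a m x).
Proof. exact: geval_cat_inv_word. Qed.

End Words.

(** * Counting group elements *)

Definition seqs_upto (T : finType) (L : nat) : seq (seq T) :=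
  flatten [seq [seq tval t | t : j.-tuple T] | j <- iota 0 L.+1].

Lemma mem_seqs_upto (T : finType) L (c : seq T) : size c <= L -> c \in seqs_upto T L.
Proof.
move=> H; apply/flatten_mapP; exists (size c); first by rewrite mem_iota add0n ltnS.
by rewrite -[c]/(tval (in_tuple c)) image_f.
Qed.

Lemma size_seqs_upto (T : finType) L : size (seqs_upto T L) <= #|T|.+1 ^ L.
Proof.
rewrite size_flatten sumnE !big_map -[iota 0 L.+1]/(index_iota 0 L.+1) big_mkord.
rewrite -[#|T|.+1]add1n expnDn; apply: leq_sum => j _.
by rewrite size_image card_tuple exp1n mul1n leq_pmull // bin_gt0 -ltnS.
Qed.

Lemma size_undup_map_flatten (A : Type) (B : eqType) (f : A -> B) (ss : seq (seq A)) :
  size (undup (map f (flatten ss))) <= \sum_(s <- ss) size (undup (map f s)).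
Proof.
elim: ss => [|s ss IH]; first by rewrite big_nil.
rewrite big_cons /= map_cat undup_cat size_cat leq_add //.
by rewrite size_filter count_size.
Qed.

Lemma leq_size_rel_inj (A B : eqType) (P : A -> B -> Prop) (X : seq A) (Y : seq B) :
  uniq X -> (forall x, x \in X -> exists2 y, y \in Y & P x y) ->
  (forall x x' y, x \in X -> x' \in X -> P x y -> P x' y -> x = x') ->
  size X <= size Y.
Proof.
elim: X Y => // x X IH Y /= /andP [HxX Hu] Hex Hinj.
have [y Hy Hxy] := Hex x (mem_head _ _).
have HX z : z \in X -> z \in x :: X by move=> Hz; rewrite inE Hz orbT.
apply: (@leq_ltn_trans (size (filter (predC1 y) Y))).
  apply: IH => // [x' Hx'|x1 x2 y' H1 H2]; last by apply: Hinj; exact: HX.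
  have [y' Hy' Hxy'] := Hex x' (HX _ Hx').
  exists y' => //; rewrite mem_filter Hy' andbT /=.
  apply/eqP => E; subst y'.
  by move: HxX; rewrite (Hinj x x' y (mem_head _ _) (HX _ Hx') Hxy Hxy') Hx'.
rewrite size_filter -(count_predC (predC1 y) Y) -addn1 leq_add2l.
by rewrite -has_count; apply/hasP; exists y => //=; rewrite eqxx.
Qed.

Section Growth.

Variables (G : Type) (grp : group_on G) (k : nat) (s : 'I_k -> G).

Definition values_of_length (j : nat) : seq (classicT G) :=
  undup [seq (geval grp s w : classicT G) | w <- [seq tval t | t : j.-tuple 'I_k]].

Lemma growth_le_sum_values m : growth grp s m <= \sum_(j < m.+1) size (values_of_length j).
Proof.
rewrite /growth /words_upto.
apply: leq_trans (size_undup_map_flatten _ _) _.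
by rewrite big_map -[iota 0 m.+1]/(index_iota 0 m.+1) big_mkord.
Qed.

Variables (iv : 'I_k -> 'I_k) (M : TM 'I_k) (a : 'I_k) (m : nat).
Hypotheses (s_iv : forall i, s (iv i) = ginv grp (s i)) (M_WP : decides M (WP grp s)).

Lemma pad_word_accepted x T :
  halted_by M (pad_word iv a m x) T -> cstate (run M (pad_word iv a m x) T) = qacc M.
Proof. by move=> HT; apply/((M_WP _).2 T HT); exact: WP_pad_word. Qed.

(* Cutting two padded runs at a boundary [b] inside the padding where they
   have the same crossing sequence yields an accepting run on
   [x a^m (x' a^m)^-1], so [x] and [x'] represent the same element. *)
Lemma pad_crossings_inj x x' b T T' : size x = size x' -> size x < b <= size x + m ->
  halted_by M (pad_word iv a m x) T -> halted_by M (pad_word iv a m x') T' ->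
  crossings (run M (pad_word iv a m x)) (Z.of_nat b) T =
  crossings (run M (pad_word iv a m x')) (Z.of_nat b) T' ->
  geval grp s x = geval grp s x'.
Proof.
move=> Hsx Hb HT HT' Hc.
have Hacc := pad_word_accepted HT; have Hacc' := pad_word_accepted HT'.
have Hi : b - size x <= m by lia.
move: HT HT' Hc Hacc Hacc'; rewrite (pad_wordE iv a x Hi) (pad_wordE iv a x' Hi).
have -> : Z.of_nat b = Z.of_nat (size (x ++ nseq (b - size x) a)).
  by rewrite size_cat size_nseq; lia.
move=> HT HT' Hc Hacc Hacc'.
have Hsz : size (x ++ nseq (b - size x) a) = size (x' ++ nseq (b - size x) a).
  by rewrite !size_cat Hsx.
have [T'' [HT'' Hst]] := cut_and_paste Hsz HT HT' Hc.
have HWP : WP grp s ((x ++ nseq m a) ++ inv_word iv (x' ++ nseq m a)).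
  rewrite -{1}(subnKC Hi) nseqD catA -catA.
  by apply/((M_WP _).2 T'' HT''); case: Hst => ->.
have := geval_eq_of_cat_inv_word s_iv HWP; rewrite !geval_cat; exact: gmulIr.
Qed.

Lemma size_values_of_length_le j L : 0 < m ->
  (forall x, size x = j -> exists2 T, halted_by M (pad_word iv a m x) T & T <= m * L) ->
  size (values_of_length j) <= m * #|{: state M * bool}|.+1 ^ L.
Proof.
move=> Hm Hfast.
pose P (g : classicT G) (y : nat * seq (state M * bool)) := exists x T,
  [/\ size x = j, geval grp s x = g, y.1 \in iota j.+1 m, halted_by M (pad_word iv a m x) T
    & crossings (run M (pad_word iv a m x)) (Z.of_nat y.1) T = y.2].
apply: (@leq_trans (size [seq (b, cs) | b <- iota j.+1 m,
                                        cs <- seqs_upto {: state M * bool} L])).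
  apply: (@leq_size_rel_inj _ _ P); first exact: undup_uniq.
    move=> g; rewrite mem_undup => /mapP [x Hx ->].
    have Hsx : size x = j by case/imageP: Hx => t _ ->; rewrite size_tuple.
    have [T HT HTL] := Hfast x Hsx.
    have [b Hb Hcs] := short_crossing j (run_trajectory M (pad_word iv a m x)) Hm HTL.
    have Hb' : b \in iota j.+1 m by rewrite mem_iota addSn ltnS.
    exists (b, crossings (run M (pad_word iv a m x)) (Z.of_nat b) T).
      by apply: allpairs_f => //; apply: mem_seqs_upto.
    by exists x, T.
  move=> g g' [b cs] _ _ [x [T [Hsx <- /= Hb HT Hc]]] [x' [T' [Hsx' <- _ HT' Hc']]].
  apply: (pad_crossings_inj (b := b)) HT HT' _; first by rewrite Hsx Hsx'.
    by move: Hb; rewrite mem_iota Hsx addSn ltnS.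
  by rewrite Hc Hc'.
by rewrite size_allpairs size_iota leq_mul2l size_seqs_upto orbT.
Qed.

Lemma growth_le_of_fast_pad L : 0 < m ->
  (forall x, size x <= m -> exists2 T, halted_by M (pad_word iv a m x) T & T <= m * L) ->
  growth grp s m <= m.+1 * (m * #|{: state M * bool}|.+1 ^ L).
Proof.
move=> Hm Hfast; apply: leq_trans (growth_le_sum_values m) _.
apply: (@leq_trans (\sum_(j < m.+1) m * #|{: state M * bool}|.+1 ^ L)).
  apply: leq_sum => j _; apply: size_values_of_length_le => // x Hx.
  by apply: Hfast; rewrite Hx -ltnS.
by rewrite big_const_ord iter_addn_0 mulnC.
Qed.

End Growth.

Lemma growth_le1_of_no_letters (G : Type) (grp : group_on G) (k : nat) (s : 'I_k -> G) n :
  k = 0 -> growth grp s n <= 1.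
Proof.
move=> Hk; subst k; rewrite /growth -(size_nseq 1 (gone grp : classicT G)).
apply: uniq_leq_size; first exact: undup_uniq.
move=> g; rewrite mem_undup => /mapP [[|i w] _ ->]; first exact: mem_head.
by case: i.
Qed.

Lemma INR_expn q l : INR (q ^ l) = pow (INR q) l.
Proof. by elim: l => [|l IH] //; rewrite expnS mult_INR IH. Qed.

(** * Asymptotics *)

Section Asymptotics.

Local Open Scope R_scope.

Lemma ln_lt_Rpower b x : 0 < b -> 0 < x -> b * ln x < Rpower x b.
Proof.
move=> Hb Hx; rewrite -ln_Rpower //.
have := exp_ineq1_le (ln (Rpower x b)); rewrite exp_ln; [lra | exact: exp_pos].
Qed.

Lemma eventually_log_lt_Rpower a c K : 0 < a -> 0 < c ->
  exists X, 1 <= X /\ forall x, X <= x -> 2 * ln (x + 1) + K < c * Rpower x a.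
Proof.
move=> Ha Hc.
have Hln2 : 0 < ln 2 by rewrite -ln_1; apply: ln_increasing; lra.
set B := 2 * ln 2 + 4 / a + Rabs K.
have Ha4 : 0 < 4 / a by apply: Rdiv_lt_0_compat; lra.
have HB : 0 <= B by rewrite /B; have := Rabs_pos K; lra.
set A := Rmax 1 (B / c + 1).
exists (Rmax 1 (Rpower A (2 / a))); split; first exact: Rmax_l.
move=> x Hx; have Hx1 : 1 <= x by apply: Rle_trans (Rmax_l _ _) Hx.
(* With [y = x ^ (a / 2)] the left side is [O(y)], the right side [c y^2]. *)
set y := Rpower x (a / 2).
have HA1 : 1 <= A by exact: Rmax_l.
have HAy : A <= y.
  have -> : A = Rpower (Rpower A (2 / a)) (a / 2).
    by rewrite Rpower_mult (_ : 2 / a * (a / 2) = 1) ?Rpower_1 //; [lra | field; lra].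
  apply: Rle_Rpower_l; first lra.
  by split; [exact: exp_pos | apply: Rle_trans (Rmax_r _ _) Hx].
have Hy1 : 1 <= y by lra.
have HBy : B + c <= c * y.
  have H : B / c + 1 <= y by apply: Rle_trans (Rmax_r _ _) HAy.
  have -> : B + c = c * (B / c + 1) by field; lra.
  by apply: Rmult_le_compat_l; lra.
have Hxa : Rpower x a = y * y by rewrite /y -Rpower_plus; f_equal; field.
have Hlnx : a / 2 * ln x < y by apply: ln_lt_Rpower; lra.
have Hlnx' : 2 * ln x < 4 / a * y.
  by apply: (Rmult_lt_reg_l (a / 2)); [lra | field_simplify; lra].
have Hln : ln (x + 1) <= ln 2 + ln x.
  rewrite -ln_mult; [|lra|lra]; case: (Rle_lt_or_eq_dec _ _ (ltac:(lra) : x + 1 <= 2 * x)).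
    by move/ln_increasing => H; apply: Rlt_le; apply: H; lra.
  by move=> ->; apply: Rle_refl.
have H1 : 2 * ln (x + 1) + K < B * y.
  have Hcoef : 0 <= 2 * ln 2 + Rabs K by have := Rabs_pos K; lra.
  have := Rmult_le_compat_l _ _ _ Hcoef Hy1; have := Rle_abs K.
  rewrite /B; lra.
have H2 : B * y < c * (y * y) by nra.
by rewrite Hxa; lra.
Qed.

Lemma exists_nat_ge r : exists n : nat, r <= INR n.
Proof.
exists (Z.to_nat (up r)); have [H _] := archimed r.
case: (Z.le_gt_cases 0 (up r)) => Hup; first by rewrite INR_IZR_INZ Z2Nat.id //; lra.
have := IZR_lt _ _ Hup; have := pos_INR (Z.to_nat (up r)); lra.
Qed.

Lemma exists_nat_ceil r : 0 <= r -> exists L : nat, r <= INR L <= r + 1.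
Proof.
move=> Hr; have [H1 H2] := archimed r.
have Hup : (0 <= up r)%Z by apply: le_IZR; lra.
by exists (Z.to_nat (up r)); rewrite INR_IZR_INZ Z2Nat.id //; lra.
Qed.

Lemma poly_exp_lt_pow2 a D q : 0 < a -> 0 < D -> 1 < q ->
  exists2 delta, 0 < delta & exists N : nat, forall m L : nat, (N <= m)%nat ->
    INR L <= delta * Rpower (INR m) a + 1 ->
    (INR m + 1) * (INR m * q ^ L) < Rpower 2 (Rpower (INR m) a / D).
Proof.
move=> Ha HD Hq.
have Hln2 : 0 < ln 2 by rewrite -ln_1; apply: ln_increasing; lra.
have Hlnq : 0 < ln q by rewrite -ln_1; apply: ln_increasing; lra.
have Hc : 0 < ln 2 / (2 * D) by apply: Rdiv_lt_0_compat; lra.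
(* This [delta] makes [q ^ (delta * m ^ a) = 2 ^ (m ^ a / (2 * D))]. *)
exists (ln 2 / (2 * D * ln q)); first by apply: Rdiv_lt_0_compat => //; nra.
have [X [HX1 HX]] := eventually_log_lt_Rpower (ln q) Ha Hc.
have [N HN] := exists_nat_ge X.
exists N => m L Hm HL.
have HXm : X <= INR m by have := le_INR _ _ (leP Hm); lra.
have Hm1 : 1 <= INR m by lra.
have Hq0 : 0 < q ^ L by apply: pow_lt; lra.
apply: ln_lt_inv; [nra | exact: exp_pos |].
rewrite ln_mult ?ln_mult ?ln_pow ?ln_Rpower; try nra.
have Hlog : ln (INR m) <= ln (INR m + 1).
  by apply: Rlt_le; apply: ln_increasing; lra.
have HLq : INR L * ln q <= (ln 2 / (2 * D * ln q) * Rpower (INR m) a + 1) * ln q.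
  by apply: Rmult_le_compat_r; lra.
have -> : Rpower (INR m) a / D * ln 2 =
  ln 2 / (2 * D) * Rpower (INR m) a + ln 2 / (2 * D) * Rpower (INR m) a by field; lra.
have Hsplit : (ln 2 / (2 * D * ln q) * Rpower (INR m) a + 1) * ln q =
  ln 2 / (2 * D) * Rpower (INR m) a + ln q by field; lra.
have := HX (INR m) HXm; lra.
Qed.

Lemma dominates_pow2_frequently (f : nat -> nat) a : 0 < a ->
  dominates f (fun n => Rpower 2 (npow n a)) ->
  exists2 D, 0 < D & forall N : nat, exists m : nat,
    (N < m)%nat /\ Rpower 2 (Rpower (INR m) a / D) <= INR (f m).
Proof.
move=> Ha [C [HC Hdom]]; exists (Rpower C a); first exact: exp_pos.
move=> N; have [n Hn] := exists_nat_ge ((INR N + 2) / C).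
have HCn : INR N + 2 <= C * INR n.+1.
  have -> : INR N + 2 = C * ((INR N + 2) / C) by field; lra.
  by apply: Rmult_le_compat_l; [lra | rewrite S_INR; lra].
have [Hfl1 Hfl2] := base_Int_part (C * INR n.+1).
have Hfl0 : (0 <= Int_part (C * INR n.+1))%Z.
  by apply: le_IZR; have := pos_INR N; lra.
exists (Z.to_nat (Int_part (C * INR n.+1))).
have Hm : INR (Z.to_nat (Int_part (C * INR n.+1))) = IZR (Int_part (C * INR n.+1)).
  by rewrite INR_IZR_INZ Z2Nat.id.
split; first by apply/ltP/INR_lt; lra.
apply: Rle_trans (Hdom n.+1); rewrite /npow; apply: Rle_Rpower; first lra.
apply: (Rmult_le_reg_l (Rpower C a)); first exact: exp_pos.
rewrite [X in X <= _]Rmult_comm /Rdiv Rmult_assoc Rinv_l ?Rmult_1_r; last first.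
  by apply: Rgt_not_eq; exact: exp_pos.
rewrite Rpower_mult_distr; [|lra|by rewrite S_INR; have := pos_INR n; lra].
apply: Rle_Rpower_l; first lra.
by rewrite Hm; have := pos_INR N; split; lra.
Qed.

Lemma little_o_time_bound (Sigma : finType) (M : TM Sigma) a : 0 < a <= 1 ->
  time_little_o M (fun n => npow n (1 + a)) ->
  forall delta, 0 < delta -> exists N0 : nat, forall (w : seq Sigma) (m L : nat),
    (N0 < size w <= 4 * m)%nat -> delta * Rpower (INR m) a <= INR L ->
    exists2 T, halted_by M w T & (T <= m * L)%nat.
Proof.
move=> Ha Hlo delta Hdelta.
have [N0 HN0] := Hlo (delta / 16) ltac:(lra).
exists N0 => w m L /andP [Hw Hwm] HL.
have [T [HT Hhalt]] := HN0 w (ltnW Hw).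
exists T => //; apply/leP/INR_le; rewrite mult_INR; apply: Rle_trans HT _.
have Hw0 : 0 < INR (size w) by apply: lt_0_INR; apply/ltP; lia.
have Hwm' : INR (size w) <= 4 * INR m.
  by have := le_INR _ _ (leP Hwm); rewrite mult_INR /=; lra.
have Hm0 : 0 < INR m by lra.
have Hma : 0 < Rpower (INR m) a := exp_pos _.
have H4 : Rpower 4 a <= 4.
  by rewrite -{2}(Rpower_1 4); [apply: Rle_Rpower; lra | lra].
have Hpow : Rpower (INR (size w)) (1 + a) <= 16 * (INR m * Rpower (INR m) a).
  apply: (Rle_trans _ (Rpower (4 * INR m) (1 + a))); first by apply: Rle_Rpower_l; lra.
  rewrite -Rpower_mult_distr ?Rpower_plus ?Rpower_1; try lra.
  by apply: Rmult_le_compat_r; [apply: Rlt_le; exact: Rmult_lt_0_compat | lra].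
move: Hw0; case: (size w) Hpow => [|n] Hpow Hw0; first by rewrite /= in Hw0; lra.
rewrite /npow; nra.
Qed.

End Asymptotics.

Lemma INR_card_succ_gt1 (T : finType) (x : T) : (1 < INR #|T|.+1)%R.
Proof.
have : 0 < #|T| by apply/card_gt0P; exists x.
by rewrite S_INR => /ltP /lt_INR /=; lra.
Qed.

Lemma growth_le_of_fast_WP (G : Type) (grp : group_on G) (k : nat) (s : 'I_k -> G)
  (M : TM 'I_k) (a delta : R) :
  (forall i : 'I_k, exists j : 'I_k, s j = ginv grp (s i)) -> decides M (WP grp s) ->
  (0 < a <= 1)%R -> time_little_o M (fun n => npow n (1 + a)) -> (0 < delta)%R ->
  exists N0 : nat, forall m L : nat, N0 < m -> (delta * Rpower (INR m) a <= INR L)%R ->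
    growth grp s m <= m.+1 * (m * #|{: state M * bool}|.+1 ^ L).
Proof.
move=> Hsym M_WP Ha M_fast Hdelta.
have [N0 HN0] := little_o_time_bound Ha M_fast Hdelta.
exists N0 => m L Hm HL; have Hm0 : 0 < m by apply: leq_ltn_trans Hm.
case: (posnP k) => [Hk0 | Hk].
  apply: leq_trans (growth_le1_of_no_letters grp s m Hk0) _.
  by rewrite !muln_gt0 Hm0 expn_gt0.
have [iv Hiv] := fin_all_exists Hsym.
apply: (growth_le_of_fast_pad (a := Ordinal Hk) Hiv M_WP Hm0) => x Hx.
by apply: HN0 HL; rewrite size_pad_word; lia.
Qed.

Theorem mainTheorem5 (G : Type) (grp : group_on G) (k : nat) (s : 'I_k -> G)
  (Hsym : forall i : 'I_k, exists j : 'I_k, s j = ginv grp (s i))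
  (Hgen : forall g : G, exists w : seq 'I_k, geval grp s w = g)
  (alpha : R) (Halpha : (0 < alpha <= 1)%R)
  (Hgrowth : dominates (growth grp s) (fun n => Rpower 2 (npow n alpha))) :
  ~ DTIME1_o (WP grp s) (fun n => npow n (1 + alpha)).
Proof.
move=> [M [M_WP M_fast]].
have [D HD Hfreq] := dominates_pow2_frequently (proj1 Halpha) Hgrowth.
have [delta Hdelta [N HN]] :=
  poly_exp_lt_pow2 (proj1 Halpha) HD (INR_card_succ_gt1 (q0 M, true)).
have [N0 HN0] := growth_le_of_fast_WP Hsym M_WP Halpha M_fast Hdelta.
have [m [Hm Hgrowth_m]] := Hfreq (maxn N N0).
have [L HL] : exists L : nat,
    (delta * Rpower (INR m) alpha <= INR L <= delta * Rpower (INR m) alpha + 1)%R.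
  by apply: exists_nat_ceil; apply: Rlt_le; apply: Rmult_lt_0_compat => //; exact: exp_pos.
have Hupper := le_INR _ _ (leP (HN0 m L (leq_ltn_trans (leq_maxr _ _) Hm) (proj1 HL))).
have Hlower := HN m L (leq_trans (leq_maxl _ _) (ltnW Hm)) (proj2 HL).
rewrite !mult_INR INR_expn S_INR in Hupper.
exact: Rlt_not_le Hlower (Rle_trans _ _ _ Hgrowth_m Hupper).
Qed.
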